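(* Let $q$ be a power of an odd prime with $q\equiv1\pmod4$, let $k$ be a divisor of $q-1$ such that $e=(q-1)/k$ is even. If $(q,k)$ gives a $3$-design, then $k\equiv 1,2,5,10,13$ or $17\pmod{24}$.
   Context: The group $\mathrm{PSL}(2,q)$ acts on $\mathrm{PG}(1,q)=\mathbb{F}_q\cup\{\infty\}$ by linear fractional transformations $z\mapsto (az+b)/(cz+d)$ with $ad-bc$ a nonzero square in $\mathbb{F}_q$. A $k$-subset $B$ of $\mathrm{PG}(1,q)$ is a starter of a $3$-design if its $\mathrm{PSL}(2,q)$-orbit is the block set of a $3$-$(q+1,k,\lambda)$ design for some positive integer $\lambda$. ''$(q,k)$ gives a $3$-design'' means the unique subgroup of order $k$ of $\mathbb{F}_q^\times$ is such a starter. *)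

From HB Require Import structures.
From mathcomp Require Import all_boot all_order all_algebra all_field.
Set Implicit Arguments. Unset Strict Implicit. Unset Printing Implicit Defensive.
Import GRing.Theory.
Local Open Scope ring_scope.

(* PG(1,q) = F ∪ {∞}, with None standing for ∞. *)
Definition PG1 (F : finFieldType) : finType := option F.

Definition lft (F : finFieldType) (a b c d : F) (z : option F) : option F :=
  match z with
  | None => if c == 0 then None else Some (a / c)
  | Some x => if c * x + d == 0 then None else Some ((a * x + b) / (c * x + d))
  end.

Definition psl_det (F : finFieldType) (a b c d : F) : bool :=
  [exists y : F, (y != 0) && (a * d - b * c == y ^+ 2)].

Definition psl_orbit (F : finFieldType) (B : {set option F}) : {set {set option F}} :=
  [set [set lft m.1.1.1 m.1.1.2 m.1.2 m.2 z | z in B]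
  | m : F * F * F * F & psl_det m.1.1.1 m.1.1.2 m.1.2 m.2].

Definition is_3design (P : finType) (blocks : {set {set P}}) : Prop :=
  exists lam : nat, (0 < lam)%N /\
    forall T : {set P}, #|T| = 3%N -> #|[set C in blocks | T \subset C]| = lam.

(* the unique subgroup of order k of F^x, viewed inside PG(1,q) *)
Definition mu_sub (F : finFieldType) (k : nat) : {set option F} :=
  [set Some x | x in [set x : F | x ^+ k == 1]].

Definition gives_3design (F : finFieldType) (k : nat) : Prop :=
  is_3design (psl_orbit (mu_sub F k)).

(* For an ordered triple (x, y, w) of distinct points of PG(1,q), whether the
   discriminant (x - y)(y - w)(w - x), computed in homogeneous coordinates, is a
   square is invariant under PSL(2,q): a matrix of determinant d multiplies it by
   d^3 times a square.  Multiplication by a non-square exchanges the two classes of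
   triples, so double counting the flags (triple, block) of a 3-design formed by a
   PSL(2,q)-orbit shows that the starter mu_k contains as many triples of each class.
   Writing a triple of mu_k as x(1, u, v), each class consists of k * P triples with
   2P = (k - 1)(k - 2).  Since -1 and all elements of mu_k are squares, the class of
   (u, v) is preserved by (u, v) |-> (v, u), (v/u, 1/u), (1/u, 1/v), and also by
   (u, v) |-> (-u, -v) when v = 1/u.  Orbit counting gives 2 | P, P <> 1 (mod 3), the
   only fixed points of the 3-cycle being the pairs of primitive cube roots of unity,
   and 4 | P when k = 2 (mod 4); these constraints leave only the stated residues
   of k modulo 24. *)

From mathcomp Require Import all_boot all_order all_algebra all_field.
From mathcomp Require Import cyclic zify ring.
Set Implicit Arguments. Unset Strict Implicit. Unset Printing Implicit Defensive.
Import GRing.Theory.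

(** * Counting orbits of free actions *)

Lemma dvdn_card_equiv (T : finType) (R : rel T) (D : {set T}) n :
  {in D & &, equivalence_rel R} ->
  {in D, forall x, #|[set y in D | R x y]| = n} -> n %| #|D|.
Proof.
move=> eqR cardR.
rewrite (@card_uniform_partition _ n _ _ _ (equivalence_partitionP eqR)).
  exact: dvdn_mull.
by move=> _ /imsetP[x Dx ->]; apply: cardR.
Qed.

Section IteratedMap.
Variables (T : finType) (f : T -> T).

Lemma iter_mod p x n : iter p f x = x -> iter n f x = iter (n %% p) f x.
Proof.
move=> fpx; rewrite {1}(divn_eq n p) addnC iterD; congr iter.
by elim: (n %/ p) => // m IHm; rewrite mulSn iterD IHm.
Qed.

Lemma iter_coprime_fix p d x :
  iter p f x = x -> iter d f x = x -> coprime d p -> f x = x.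
Proof.
move=> fpx fdx co; have [p0|p_gt0] := posnP p.
  by move: co; rewrite p0 /coprime gcdn0 => /eqP d1; rewrite -[RHS]fdx d1.
have [a _] := Bezoutl d p_gt0; rewrite gcdnC (eqP co) => /dvdnP[b eab].
have fadx : iter (a * d) f x = x by rewrite (iter_mod _ fdx) modnMl.
have -> : f x = iter (1 + a * d) f x by rewrite iterD fadx.
by rewrite eab (iter_mod _ fpx) modnMl.
Qed.

Variables (p : nat) (D : {set T}).
Hypotheses (p_prime : prime p) (fD : {in D, forall x, f x \in D}).
Hypotheses (f_order : {in D, forall x, iter p f x = x}).
Hypothesis f_fixfree : {in D, forall x, f x != x}.

Let orbit x := [set iter i f x | i : 'I_p].

Let iter_in x n : x \in D -> iter n f x \in D.
Proof. by move=> Dx; elim: n => //= n; apply: fD. Qed.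

Let mem_orbit x n : x \in D -> iter n f x \in orbit x.
Proof.
move=> Dx; rewrite (iter_mod _ (f_order Dx)).
by apply/imsetP; exists (Ordinal (ltn_pmod n (prime_gt0 p_prime))).
Qed.

Let card_orbit x : x \in D -> #|orbit x| = p.
Proof.
move=> Dx; rewrite card_imset ?card_ord // => i j eq_ij.
wlog le_ij : i j eq_ij / i <= j.
  by move=> IH; case/orP: (leq_total i j) => ?; [|apply/esym]; apply: IH.
apply/val_inj/eqP; rewrite eqn_leq le_ij /= leqNgt; apply/negP => lt_ij.
have fdx : iter (p - j + i) f x = x.
  by rewrite iterD eq_ij -iterD subnK ?f_order // ltnW.
have co : coprime (p - j + i) p.
  by rewrite coprime_sym prime_coprime // gtnNdvd //; have := ltn_ord j; lia.
by have := f_fixfree Dx; rewrite (iter_coprime_fix (f_order Dx) fdx co) eqxx.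
Qed.

Lemma dvdn_card_fixfree : p %| #|D|.
Proof.
apply: (@dvdn_card_equiv _ (fun x y => y \in orbit x)).
  move=> x y z Dx Dy Dz; split; first by rewrite -[z]/(iter 0 f z) mem_orbit.
  case/imsetP=> i _ ->; apply/idP/idP => /imsetP[j _ ->]; last first.
    by rewrite -iterD mem_orbit.
  have -> : iter j f x = iter (j + (p - i)) f (iter i f x).
    by rewrite -iterD -addnA subnK ?iterD ?f_order // ltnW.
  by rewrite mem_orbit ?iter_in.
move=> x Dx; rewrite -(card_orbit Dx); apply: eq_card => y; rewrite inE.
by apply/andb_idl => /imsetP[i _ ->]; apply: iter_in.
Qed.

End IteratedMap.

Section KleinAction.
Variables (T : finType) (f g : T -> T) (D : {set T}).
Hypotheses (fK : involutive f) (gK : involutive g).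
Hypothesis fgC : forall x, g (f x) = f (g x).
Hypotheses (fD : {in D, forall x, f x \in D}) (gD : {in D, forall x, g x \in D}).
Hypothesis fixfree : {in D, forall x, [&& f x != x, g x != x & f (g x) != x]}.

Lemma dvdn4_card_klein : 4 %| #|D|.
Proof.
apply: (@dvdn_card_equiv _ (fun x y => y \in [:: x; f x; g x; f (g x)])).
  move=> x y z _ _ _; split; first exact: mem_head.
  rewrite !inE => /or4P[] /eqP ->; rewrite ?(fK, gK, fgC) //;
    by apply/idP/idP => /or4P[] ->; rewrite ?orbT.
move=> x Dx; have /and3P[fx gx fgx] := fixfree Dx.
have fx_gx : f x != g x by rewrite -(can_eq fK) fK eq_sym.
have fx_fgx : f x != f (g x) by rewrite (can_eq fK) eq_sym.
have gx_fgx : g x != f (g x) by rewrite -fgC (can_eq gK) eq_sym.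
transitivity #|[:: x; f x; g x; f (g x)]|; last first.
  by apply/card_uniqP; rewrite /= !inE !negb_or !(eq_sym x) fx gx fgx fx_gx fx_fgx gx_fgx.
apply: eq_card => y; rewrite !inE; apply/andb_idl.
by case/or4P=> /eqP ->; rewrite ?fD ?gD ?fD.
Qed.

End KleinAction.

(** * The residue of k modulo 24 *)

Lemma dvdn_exp2_mulSn e n : 2 ^ e %| n.+1 * n -> (2 ^ e %| n.+1) || (2 ^ e %| n).
Proof.
case: (boolP (odd n)) => [odd_n | even_n] dvd_e.
  have co : coprime (2 ^ e) n by rewrite coprimeXl ?coprime2n.
  by rewrite (Gauss_dvdl _ co) in dvd_e; rewrite dvd_e.
have co : coprime (2 ^ e) n.+1 by rewrite coprimeXl ?coprime2n.
by rewrite (Gauss_dvdr _ co) in dvd_e; rewrite dvd_e orbT.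
Qed.

Lemma mod24_of_pair_count k P : 0 < k -> 2 * P = (k - 1) * (k - 2) ->
  2 %| P -> P %% 3 != 1 -> (k %% 4 = 2 -> 4 %| P) ->
  k %% 24 \in [:: 1; 2; 5; 10; 13; 17].
Proof.
case: k => [|[|n]] // _; rewrite !subSS !subn0 => eP P2 P3 P4.
have {}P2 : 2 ^ 2 %| n.+1 * n by rewrite -eP expnS dvdn_mul.
have mod4 : n.+2 %% 4 \in [:: 1; 2].
  by case/orP: (dvdn_exp2_mulSn P2) => /dvdnP[a ->]; rewrite !inE; lia.
have mod8 : n.+2 %% 4 = 2 -> n.+2 %% 8 = 2.
  move=> k4; have /dvdnP[b Pb] := P4 k4.
  have : 2 ^ 3 %| n.+1 * n by rewrite -eP Pb; apply/dvdnP; exists b; lia.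
  by move/dvdn_exp2_mulSn/orP => [] /dvdnP[a ea]; lia.
have mod3 : n.+2 %% 3 != 0.
  apply: contra P3 => /eqP k3.
  have n13 : n.+1 %% 3 = 2 by move: k3; clear; lia.
  have n3 : n %% 3 = 1 by move: k3; clear; lia.
  have : (2 * P) %% 3 = 2 by rewrite eP -modnMm n13 n3.
  by clear; lia.
have residues r : [&& r < 24, r %% 4 \in [:: 1; 2], (r %% 4 == 2) ==> (r %% 8 == 2)
    & r %% 3 != 0] ==> (r \in [:: 1; 2; 5; 10; 13; 17]).
  by do 24?case: r => [//|r].
have mod_24 d : d %| 24 -> n.+2 %% 24 %% d = n.+2 %% d by move=> ?; rewrite modn_dvdm.
move: (residues (n.+2 %% 24)); rewrite ltn_mod !mod_24 // mod4 mod3 /= andbT.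
by move/implyP; apply; apply/implyP => /eqP/mod8 ->.
Qed.

(** * Squares in a finite field *)

Section Squares.
Local Open Scope ring_scope.
Variable F : finFieldType.
Local Notation n := #|F|.-1.

Definition is_square (a : F) := [exists y, a == y ^+ 2].

Lemma is_squareP a : reflect (exists y, a = y ^+ 2) (is_square a).
Proof. by apply: (iffP existsP) => [[y /eqP ->]|[y ->]]; exists y. Qed.

Lemma is_squareMsq a s : s != 0 -> is_square (a * s ^+ 2) = is_square a.
Proof.
move=> s0; apply/is_squareP/is_squareP => [[y e]|[y ->]].
  by exists (y / s); rewrite expr_div_n -e mulfK // expf_neq0.
by exists (y * s); rewrite exprMn.
Qed.

Lemma is_squareN a : is_square (-1) -> is_square (- a) = is_square a.
Proof.
case/is_squareP=> w ew; have w0 : w != 0.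
  by apply: contra_eq_neq ew => ->; rewrite expr0n oppr_eq0 oner_eq0.
by rewrite -mulrN1 ew is_squareMsq.
Qed.

Lemma expf_card_unit (x : F) : x != 0 -> x ^+ n = 1.
Proof.
move=> x0; apply: (mulIf x0); rewrite mul1r -exprSr.
by rewrite (ltn_predK (finNzRing_gt1 F)) expf_card.
Qed.

Lemma finField_prim_root : exists z : F, n.-primitive_root z.
Proof.
have n_gt0 : (0 < n)%N by rewrite -ltnS (ltn_predK (finNzRing_gt1 F)) finNzRing_gt1.
have units_n : all n.-unity_root (enum (predC1 (0 : F))).
  by apply/allP=> x; rewrite mem_enum inE unity_rootE => /expf_card_unit ->.
have size_units : (n <= size (enum (predC1 (0 : F)%R)))%N.
  by rewrite -cardE cardC1.
have /hasP[z _ ?] := has_prim_root n_gt0 units_n (enum_uniq _) size_units.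
by exists z.
Qed.

Variable z : F.
Hypotheses (z_prim : n.-primitive_root z) (n_even : ~~ odd n).

Let n_gt0 : (0 < n)%N := prim_order_gt0 z_prim.

Lemma prim_root_neq0 : z != 0.
Proof. by rewrite (prim_root_eq0 z_prim) -lt0n. Qed.

Lemma prim_root_onto x : x != 0 -> exists i, x = z ^+ i.
Proof. by move/expf_card_unit/(prim_rootP z_prim) => [i ->]; exists i. Qed.

Lemma is_square_expr i : is_square (z ^+ i) = ~~ odd i.
Proof.
apply/is_squareP/idP => [[y e]|even_i]; last first.
  by exists (z ^+ i./2); rewrite -exprM muln2 -{1}(odd_double_half i) (negbTE even_i).
have y0 : y != 0 by apply: contra_eq_neq e => ->; rewrite expr0n expf_neq0 ?prim_root_neq0.
have [j ej] := prim_root_onto y0; move/eqP: e; rewrite ej -exprM.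
rewrite (eq_prim_root_expr z_prim) => /eqP e.
by rewrite -(odd_mod i (negbTE n_even)) e odd_mod ?(negbTE n_even) // oddM andbF.
Qed.

Lemma is_squareM a b : a != 0 -> b != 0 ->
  is_square (a * b) = (is_square a == is_square b).
Proof.
move=> /prim_root_onto[i ->] /prim_root_onto[j ->].
by rewrite -exprD !is_square_expr oddD; case: odd; case: odd.
Qed.

Lemma prim_root_nonsquare : ~~ is_square z.
Proof. by rewrite -[z]expr1 is_square_expr. Qed.

Let half_n : n./2.*2 = n.
Proof. by rewrite -[RHS](odd_double_half n) (negbTE n_even). Qed.

Let prim_root_half_neq1 : z ^+ n./2 != 1.
Proof. by rewrite -(prim_order_dvd z_prim) gtnNdvd //; lia. Qed.

Lemma prim_root_half : z ^+ n./2 = -1.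
Proof.
have := prim_root_half_neq1.
have : (z ^+ n./2) ^+ 2 = 1 by rewrite -exprM muln2 half_n prim_expr_order.
move/eqP; rewrite -subr_eq0 subr_sqr_1 mulf_eq0 subr_eq0 addr_eq0.
by case/orP=> /eqP ->; rewrite ?eqxx.
Qed.

Lemma oner_neqN1 : (1 : F) != -1.
Proof. by rewrite -prim_root_half eq_sym prim_root_half_neq1. Qed.

Lemma oppf_neq (x : F) : x != 0 -> - x != x.
Proof.
move=> x0; apply: contraNneq oner_neqN1 => e.
by apply/eqP/(mulfI x0); rewrite mulrN1 mulr1 e.
Qed.

Lemma is_squareN1 : (4 %| n)%N -> is_square (-1).
Proof.
move=> /dvdnP[c ec]; rewrite -prim_root_half is_square_expr ec.
by rewrite (_ : (c * 4)./2 = c.*2)%N ?odd_double //; lia.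
Qed.

End Squares.

(** * The discriminant of a triple of points of the projective line *)

Section ProjectiveLine.
Local Open Scope ring_scope.
Variable F : finFieldType.
Local Notation triple := (option F * option F * option F)%type.
Implicit Types (x y w : option F) (p r : F * F) (m : F * F * F * F) (t : triple).

Definition coords x : F * F := if x is Some a then (a, 1) else (1, 0).
Definition cross p r := p.1 * r.2 - p.2 * r.1.
Definition bracket x y := cross (coords x) (coords y).
Definition disc3 t := bracket t.1.1 t.1.2 * bracket t.1.2 t.2 * bracket t.2 t.1.1.
Definition square_disc t := is_square (disc3 t).
Definition distinct3 t := [&& t.1.1 != t.1.2, t.1.2 != t.2 & t.1.1 != t.2].

Definition mdet m := m.1.1.1 * m.2 - m.1.1.2 * m.1.2.
Definition mlft m := lft m.1.1.1 m.1.1.2 m.1.2 m.2.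
Definition mact m p := (m.1.1.1 * p.1 + m.1.1.2 * p.2, m.1.2 * p.1 + m.2 * p.2).
Definition scale_pair (s : F) p := (s * p.1, s * p.2).
Definition lft3 m t := (mlft m t.1.1, mlft m t.1.2, mlft m t.2).

Lemma bracket_eq0 x y : (bracket x y == 0) = (x == y).
Proof.
case: x => [a|]; case: y => [b|]; rewrite /bracket /cross /=;
  rewrite ?(mulr1, mul1r, mulr0, mul0r, subr0, sub0r, oppr_eq0, oner_eq0, eqxx) //.
by rewrite subr_eq0.
Qed.

Lemma lft_id x : lft 1 0 0 1 x = x.
Proof.
case: x => [u|] /=; last by rewrite eqxx.
by rewrite mul0r add0r oner_eq0 mul1r addr0 divr1.
Qed.

Lemma disc3_neq0 t : distinct3 t -> disc3 t != 0.
Proof. by case/and3P=> ? ? ?; rewrite !mulf_neq0 // bracket_eq0 // eq_sym. Qed.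

Lemma cross_mact m p r : cross (mact m p) (mact m r) = mdet m * cross p r.
Proof. by rewrite /cross /mdet /=; ring. Qed.

Lemma mact_coords m x : mdet m != 0 ->
  exists2 s, s != 0 & mact m (coords x) = scale_pair s (coords (mlft m x)).
Proof.
case: m => [[[a b] c] d]; rewrite /mdet /mlft /mact /scale_pair /= => det0.
case: x => [u|] /=; case: ifPn => [/eqP e|ne] /=.
- exists (a * u + b); last by rewrite !mulr1 e mulr0.
  apply: contraNneq det0 => e2.
  have eb : b = - (a * u) by apply/eqP; rewrite -addr_eq0 addrC e2.
  have ed : d = - (c * u) by apply/eqP; rewrite -addr_eq0 addrC e.
  by rewrite eb ed; apply/eqP; ring.
- by exists (c * u + d); rewrite // !mulr1 [_ * (_ / _)]mulrC divfK.
- exists a; last by rewrite !mulr1 !mulr0 !addr0 e.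
  by apply: contraNneq det0 => ->; rewrite e mul0r mulr0 subr0 eqxx.
- by exists c; rewrite // !mulr1 !mulr0 !addr0 [_ * (_ / _)]mulrC divfK.
Qed.

Lemma cross_scale s s' p r : cross (scale_pair s p) (scale_pair s' r) = s * s' * cross p r.
Proof. by rewrite /cross /=; ring. Qed.

Lemma bracket_mlft m x y sx sy :
    mact m (coords x) = scale_pair sx (coords (mlft m x)) ->
    mact m (coords y) = scale_pair sy (coords (mlft m y)) ->
  bracket (mlft m x) (mlft m y) * (sx * sy) = mdet m * bracket x y.
Proof. by move=> ex ey; rewrite /bracket -cross_mact ex ey cross_scale mulrC. Qed.

Lemma mlft_inj m : mdet m != 0 -> injective (mlft m).
Proof.
move=> det0 x y exy; have [sx _ ex] := mact_coords x det0.
have [sy _ ey] := mact_coords y det0.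
have := bracket_mlft ex ey; rewrite exy (eqP (_ : bracket _ _ == 0)) ?bracket_eq0 //.
by move/esym/eqP; rewrite mul0r mulf_eq0 (negbTE det0) bracket_eq0 => /eqP.
Qed.

Lemma lft3_inj m : mdet m != 0 -> injective (lft3 m).
Proof.
move=> /mlft_inj inj [[x1 x2] x3] [[y1 y2] y3] [].
by move=> /inj -> /inj -> /inj ->.
Qed.

Lemma distinct3_lft3 m t : mdet m != 0 -> distinct3 (lft3 m t) = distinct3 t.
Proof. by move=> /mlft_inj inj; rewrite /distinct3 /= !(inj_eq inj). Qed.

Lemma disc3_lft3 m t : mdet m != 0 ->
  exists2 s, s != 0 & disc3 (lft3 m t) * s ^+ 2 = mdet m ^+ 3 * disc3 t.
Proof.
move=> det0; have [s1 s1_0 e1] := mact_coords t.1.1 det0.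
have [s2 s2_0 e2] := mact_coords t.1.2 det0.
have [s3 s3_0 e3] := mact_coords t.2 det0.
exists (s1 * s2 * s3); first by rewrite !mulf_neq0.
rewrite /disc3 /=; transitivity
  (bracket (mlft m t.1.1) (mlft m t.1.2) * (s1 * s2) *
   (bracket (mlft m t.1.2) (mlft m t.2) * (s2 * s3)) *
   (bracket (mlft m t.2) (mlft m t.1.1) * (s3 * s1))); first ring.
by rewrite (bracket_mlft e1 e2) (bracket_mlft e2 e3) (bracket_mlft e3 e1); ring.
Qed.

Lemma psl_det_mdet m :
  psl_det m.1.1.1 m.1.1.2 m.1.2 m.2 -> exists2 y, y != 0 & mdet m = y ^+ 2.
Proof. by case/existsP=> y /andP[y0 /eqP]; exists y. Qed.

Lemma square_disc_lft3 m t :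
  psl_det m.1.1.1 m.1.1.2 m.1.2 m.2 -> square_disc (lft3 m t) = square_disc t.
Proof.
case/psl_det_mdet=> y y0 ey; have det0 : mdet m != 0 by rewrite ey expf_neq0.
have [s s0 e] := disc3_lft3 t det0.
rewrite /square_disc -(is_squareMsq _ s0) e ey -exprM mulnC exprM mulrC.
by rewrite is_squareMsq // expf_neq0.
Qed.

Variable z : F.
Hypotheses (z_prim : #|F|.-1.-primitive_root z) (n_even : ~~ odd #|F|.-1).

Lemma square_disc_scale_prim t :
  distinct3 t -> square_disc (lft3 (z, 0, 0, 1) t) = ~~ square_disc t.
Proof.
move=> /disc3_neq0 disc0; have z0 := prim_root_neq0 z_prim.
have det0 : mdet (z, 0, 0, 1) != 0 by rewrite /mdet /= mulr1 mulr0 subr0.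
have [s s0 e] := disc3_lft3 t det0.
rewrite /square_disc -(is_squareMsq _ s0) e /mdet /= mulr1 mulr0 subr0.
rewrite exprS -mulrA [_ * disc3 t]mulrC.
rewrite (is_squareM z_prim n_even z0 (mulf_neq0 disc0 (expf_neq0 2 z0))).
by rewrite is_squareMsq // (negbTE (prim_root_nonsquare z_prim n_even)); case: is_square.
Qed.

End ProjectiveLine.

(** * Double counting in a 3-design *)

Lemma card_sep (T : finType) (D : {set T}) (P : pred T) :
  #|[set x in D | P x]| = \sum_(x in D) P x.
Proof. by rewrite -sum1dep_card big_mkcondr; apply: eq_bigr => x _; case: (P x). Qed.

Lemma double_count (T U : finType) (A : {set T}) (B : {set U}) (r : T -> U -> bool) :
  \sum_(x in A) #|[set y in B | r x y]| = \sum_(y in B) #|[set x in A | r x y]|.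
Proof.
under eq_bigr do rewrite card_sep; under [RHS]eq_bigr do rewrite card_sep.
exact: exchange_big.
Qed.

Section DesignCount.
Local Open Scope ring_scope.
Variable F : finFieldType.
Local Notation triple := (option F * option F * option F)%type.

Definition class_triples c := [set t : triple | distinct3 t && (square_disc t == c)].
Definition in_block (C : {set option F}) (t : triple) :=
  [&& t.1.1 \in C, t.1.2 \in C & t.2 \in C].
Definition count_in C c := #|[set t in class_triples c | in_block C t]|.

Lemma mem_psl_orbit (B : {set option F}) : B \in psl_orbit B.
Proof.
apply/imsetP; exists (1, 0, 0, 1); last by rewrite (eq_imset _ (@lft_id F)) imset_id.
by rewrite inE; apply/existsP; exists 1; rewrite /= oner_neq0 mulr1 mulr0 subr0 expr1n eqxx.
Qed.

Lemma count_in_orbit B C c : C \in psl_orbit B -> count_in C c = count_in B c.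
Proof.
case/imsetP=> m; rewrite inE => psl_m ->.
have [y y0 ey] := psl_det_mdet psl_m.
have det0 : mdet m != 0 by rewrite ey expf_neq0.
rewrite /count_in -(card_preimset _ (lft3_inj det0)); apply: eq_card => t.
rewrite !inE distinct3_lft3 // square_disc_lft3 // /in_block /=.
by rewrite !(mem_imset _ _ (mlft_inj det0)).
Qed.

Lemma card_class_triples : ~~ odd #|F|.-1 ->
  #|class_triples true| = #|class_triples false|.
Proof.
move=> n_even; have [z z_prim] := finField_prim_root F.
have det0 : mdet (z, 0, 0, 1) != 0.
  by rewrite /mdet /= mulr1 mulr0 subr0 (prim_root_neq0 z_prim).
suff le c : (#|class_triples c| <= #|class_triples (~~ c)|)%N.
  by apply/eqP; rewrite eqn_leq le (le false).
rewrite -(card_imset _ (lft3_inj det0)); apply/subset_leq_card/subsetP => s.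
case/imsetP=> t; rewrite !inE => /andP[dt /eqP <-] ->.
by rewrite distinct3_lft3 // dt (square_disc_scale_prim z_prim n_even dt) eqxx.
Qed.

Lemma design_count_balanced B : ~~ odd #|F|.-1 -> is_3design (psl_orbit B) ->
  count_in B true = count_in B false.
Proof.
move=> n_even [lam [_ lamP]].
have count_eq c : (#|class_triples c| * lam = #|psl_orbit B| * count_in B c)%N.
  transitivity (\sum_(t in class_triples c) #|[set C in psl_orbit B | in_block C t]|)%N.
    rewrite -sum_nat_const; apply: eq_bigr => t.
    rewrite inE => /andP[/and3P[d12 d23 d13] _]; rewrite -(lamP [set t.1.1; t.1.2; t.2]).
      by apply: eq_card => C; rewrite !inE !subUset !sub1set /in_block -andbA.
    by rewrite -setUA cardsU1 cards2 !inE negb_or d12 d13 d23.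
  rewrite (double_count _ _ (fun t C => in_block C t)) -sum_nat_const.
  by apply: eq_bigr => C /count_in_orbit <-.
have orbit_gt0 : (0 < #|psl_orbit B|)%N by apply/card_gt0P; exists B; apply: mem_psl_orbit.
apply/eqP; rewrite -(eqn_pmul2l orbit_gt0) -!count_eq.
by rewrite (card_class_triples n_even).
Qed.

End DesignCount.

(** * Pairs of roots of unity *)

Section RootsOfUnity.
Local Open Scope ring_scope.
Variables (F : finFieldType) (z : F) (k : nat).
Local Notation n := #|F|.-1.
Hypotheses (z_prim : n.-primitive_root z) (k_dvd_n : (k %| n)%N).

Definition mu := [set x : F | x ^+ k == 1].

Let k_gt0 : (0 < k)%N := dvdn_gt0 (prim_order_gt0 z_prim) k_dvd_n.

Lemma card_mu : #|mu| = k.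
Proof.
have w_prim := dvdn_prim_root z_prim k_dvd_n.
set w := z ^+ (n %/ k) in w_prim.
have -> : mu = [set w ^+ i | i : 'I_k].
  apply/setP=> x; rewrite inE; apply/eqP/imsetP => [/(prim_rootP w_prim)[i ->]|[i _ ->]].
    by exists i.
  by rewrite -exprM mulnC exprM (prim_expr_order w_prim) expr1n.
rewrite card_imset ?card_ord // => i j /eqP.
by rewrite (eq_prim_root_expr w_prim) !modn_small ?ltn_ord // => /eqP/val_inj.
Qed.

Lemma mu_neq0 x : x \in mu -> x != 0.
Proof.
by rewrite inE; apply: contraTneq => ->; rewrite expr0n gtn_eqF // eq_sym oner_eq0.
Qed.

Lemma mu1 : 1 \in mu.
Proof. by rewrite inE expr1n. Qed.

Lemma muM x y : x \in mu -> y \in mu -> x * y \in mu.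
Proof. by rewrite !inE exprMn => /eqP -> /eqP ->; rewrite mulr1. Qed.

Lemma muV x : x \in mu -> x^-1 \in mu.
Proof. by rewrite !inE exprVn => /eqP ->; rewrite invr1. Qed.

Lemma muN x : ~~ odd k -> x \in mu -> - x \in mu.
Proof. by move=> even_k; rewrite !inE exprNn -signr_odd (negbTE even_k) mul1r. Qed.

Definition dsc (a b c : F) := (a - b) * (b - c) * (c - a).

Lemma disc3_Some a b c : disc3 (Some a, Some b, Some c) = dsc a b c.
Proof. by rewrite /disc3 /bracket /cross /dsc /=; ring. Qed.

Lemma dsc_scale s a b c : dsc (s * a) (s * b) (s * c) = s ^+ 3 * dsc a b c.
Proof. by rewrite /dsc; ring. Qed.

Definition mu_pairs :=
  [set p : F * F | [&& p.1 \in mu, p.2 \in mu, p.1 != 1, p.2 != 1 & p.1 != p.2]].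
Definition class_pairs c := [set p in mu_pairs | is_square (dsc 1 p.1 p.2) == c].

Lemma class_pairsP c p : (p \in class_pairs c) =
  [&& p.1 \in mu, p.2 \in mu, p.1 != 1, p.2 != 1, p.1 != p.2 & is_square (dsc 1 p.1 p.2) == c].
Proof. by rewrite !inE -!andbA. Qed.

Lemma card_mu_pairs : #|mu_pairs| = ((k - 1) * (k - 2))%N.
Proof.
pose A := mu :\ 1.
have cardA : #|A| = (k - 1)%N.
  have := cardsD1 1 mu; rewrite mu1 card_mu /A => ->.
  by rewrite add1n subn1.
have -> : mu_pairs = [set p | (p.1 \in A) && (p.2 \in A :\ p.1)].
  by apply/setP=> -[u v]; rewrite !inE /= (eq_sym v u); do !case: (_ == _).
rewrite -sum1dep_card; transitivity (\sum_(u in A) \sum_(v in A :\ u) 1)%N.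
  by rewrite pair_big_dep.
rewrite -cardA -sum_nat_const; apply: eq_bigr => u Au; rewrite sum1_card.
by have := cardsD1 u A; rewrite Au; lia.
Qed.

Lemma card_class_pairs_sum :
  (#|class_pairs true| + #|class_pairs false|)%N = #|mu_pairs|.
Proof.
by rewrite !card_sep -big_split -sum1_card; apply: eq_bigr => p _; case: is_square.
Qed.

Lemma class_pairs_sub c : class_pairs c \subset mu_pairs.
Proof. by rewrite /class_pairs setIdE subsetIl. Qed.

Hypotheses (n_even : ~~ odd n) (e_even : ~~ odd (n %/ k)).

Lemma mu_square x : x \in mu -> is_square x.
Proof.
move=> mu_x; have [i ei] := prim_root_onto z_prim (mu_neq0 mu_x).
move: mu_x; rewrite inE ei -exprM -(prim_order_dvd z_prim) -{1}(divnK k_dvd_n).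
rewrite dvdn_pmul2r // => /dvdnP[c ->].
by rewrite (is_square_expr z_prim n_even) oddM negb_and e_even orbT.
Qed.

Lemma is_square_cube_mu s d : s \in mu -> is_square (s ^+ 3 * d) = is_square d.
Proof.
move=> /[dup] /mu_square/is_squareP[y ey] /mu_neq0 s0.
have y0 : y != 0 by apply: contraNneq s0 => y0; rewrite ey y0 expr0n.
by rewrite ey -exprM mulnC exprM mulrC is_squareMsq // expf_neq0.
Qed.

Lemma count_in_mu c : count_in (mu_sub F k) c = (k * #|class_pairs c|)%N.
Proof.
pose h (w : F * (F * F)) := (Some w.1, Some (w.1 * w.2.1), Some (w.1 * w.2.2)).
have h_inj : {in setX mu (class_pairs c) &, injective h}.
  move=> [x [u v]] [x' [u' v']]; rewrite in_setX => /andP[mu_x _] _ [<-].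
  by move=> /(mulfI (mu_neq0 mu_x)) -> /(mulfI (mu_neq0 mu_x)) ->.
rewrite -[in RHS]card_mu -cardsX -(card_in_imset h_inj).
apply: eq_card => -[[t1 t2] t3]; apply/idP/imsetP => [|[[x [u v]]]].
  rewrite !inE /in_block /= => /andP[/andP[dt ct] /and3P[]].
  move=> /imsetP[x mu_x ex] /imsetP[y mu_y ey] /imsetP[w mu_w ew].
  have x0 := mu_neq0 mu_x.
  exists (x, (y / x, w / x)); last by rewrite /h /= ![x * (_ / x)]mulrC !divfK ?ex ?ey ?ew.
  have div_eq a b : (a / x == b / x) = (a == b) by rewrite (inj_eq (mulIf _)) ?invr_neq0.
  move: dt ct; rewrite ex ey ew /distinct3 /square_disc /= disc3_Some.
  move=> /and3P[xy yw xw] ct; rewrite in_setX class_pairsP /= mu_x !muM ?muV //=.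
  rewrite -(divff x0) !div_eq eq_sym xy eq_sym xw yw /=.
  by rewrite ![_ / x]mulrC dsc_scale is_square_cube_mu ?muV.
rewrite in_setX class_pairsP /= => /andP[mu_x /and5P[mu_u mu_v u1 v1 /andP[uv cc]]].
case=> -> -> ->; have x0 := mu_neq0 mu_x.
rewrite !inE /distinct3 /square_disc /in_block /= !(inj_eq (@Some_inj _)).
rewrite !imset_f ?muM // (inj_eq (mulfI x0)) uv -{1 3}[x]mulr1 !(inj_eq (mulfI x0)).
rewrite !(eq_sym (1 : F)) u1 v1 disc3_Some -[X in dsc X]mulr1 dsc_scale.
by rewrite is_square_cube_mu ?cc.
Qed.

Hypothesis minus1_square : is_square (-1 : F).

Definition swap_pair (p : F * F) := (p.2, p.1).
(* The triple (1, u, v) rotated to (u, v, 1) and rescaled by 1/u. *)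
Definition rot_pair (p : F * F) := (p.2 / p.1, p.1^-1).
Definition inv_pair (p : F * F) := (p.1^-1, p.2^-1).
Definition opp_pair (p : F * F) := (- p.1, - p.2).

Lemma swap_pairK : involutive swap_pair. Proof. by case. Qed.
Lemma inv_pairK : involutive inv_pair. Proof. by case=> u v; rewrite /inv_pair /= !invrK. Qed.
Lemma opp_pairK : involutive opp_pair. Proof. by case=> u v; rewrite /opp_pair /= !opprK. Qed.

Lemma swap_pair_neq c p : p \in class_pairs c -> swap_pair p != p.
Proof.
case: p => u v; rewrite class_pairsP /= => /and5P[_ _ _ _ /andP[uv _]].
by rewrite /swap_pair xpair_eqE eq_sym (negbTE uv).
Qed.

Lemma swap_class_pairs c p : p \in class_pairs c -> swap_pair p \in class_pairs c.
Proof.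
case: p => u v; rewrite !class_pairsP /= => /and5P[-> -> -> -> /andP[uv cc]].
rewrite eq_sym uv (_ : dsc 1 v u = - dsc 1 u v) ?(is_squareN _ minus1_square) //.
by rewrite /dsc; ring.
Qed.

Lemma rot_class_pairs c p : p \in class_pairs c -> rot_pair p \in class_pairs c.
Proof.
case: p => u v; rewrite !class_pairsP /= => /and5P[mu_u mu_v u1 v1 /andP[uv cc]].
have u0 := mu_neq0 mu_u.
have div_eq a b : (a / u == b / u) = (a == b) by rewrite (inj_eq (mulIf _)) ?invr_neq0.
have vu1 : v / u != 1 by rewrite -(divff u0) div_eq eq_sym.
have vuu : v / u != u^-1 by rewrite -[X in _ != X]mul1r div_eq.
rewrite muM ?muV // invr_eq1 u1 vu1 vuu /=.
rewrite (_ : dsc _ _ _ = u^-1 ^+ 3 * dsc 1 u v) ?is_square_cube_mu ?muV //.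
by rewrite /dsc; field.
Qed.

Lemma rot_pair3 p : p \in mu_pairs -> iter 3 rot_pair p = p.
Proof.
case: p => u v; rewrite inE /= => /and5P[mu_u mu_v _ _ _].
have u0 := mu_neq0 mu_u; have v0 := mu_neq0 mu_v.
by rewrite /rot_pair /=; congr pair; field; rewrite u0 v0 ?oner_neq0.
Qed.

Lemma inv_class_pairs c p : p \in class_pairs c -> inv_pair p \in class_pairs c.
Proof.
case: p => u v; rewrite !class_pairsP /= => /and5P[mu_u mu_v u1 v1 /andP[uv cc]].
have u0 := mu_neq0 mu_u; have v0 := mu_neq0 mu_v.
rewrite !muV // !invr_eq1 u1 v1 (inj_eq (@invr_inj F)) uv /=.
have -> : dsc 1 u^-1 v^-1 = - (dsc 1 u v * ((u * v)^-1) ^+ 2).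
  by rewrite /dsc; field; rewrite u0 v0.
by rewrite (is_squareN _ minus1_square) is_squareMsq // invr_neq0 // mulf_neq0.
Qed.

Lemma opp_class_pairs c p : ~~ odd k -> p \in class_pairs c -> p.2 = p.1^-1 ->
  opp_pair p \in class_pairs c.
Proof.
move=> even_k; case: p => u v; rewrite !class_pairsP /=.
move=> /and5P[mu_u mu_v u1 v1 /andP[uv cc]] ev.
have u0 := mu_neq0 mu_u.
have uN1 : u != -1 by apply: contraNneq uv => eu; rewrite ev eu invrN1.
have vN1 : v != -1 by apply: contraNneq uv => ev1; rewrite -[u]invrK -ev ev1 invrN1.
rewrite !muN // (inj_eq (@oppr_inj F)) uv (eqr_oppLR u 1) (eqr_oppLR v 1) uN1 vN1 /=.
have u1' : 1 - u != 0 by rewrite subr_eq0 eq_sym.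
have -> : dsc 1 (- u) (- v) = dsc 1 u v * ((1 + u) / (1 - u)) ^+ 2.
  by rewrite ev /dsc; field; rewrite u0 u1'.
by rewrite is_squareMsq // mulf_neq0 ?invr_neq0 // addrC addr_eq0.
Qed.

Lemma dvdn2_card_class_pairs c : (2 %| #|class_pairs c|)%N.
Proof.
apply: (@dvdn_card_fixfree _ swap_pair) => // [p|p _|]; first exact: swap_class_pairs.
  exact: swap_pairK.
exact: swap_pair_neq.
Qed.

Definition rot_fixed := [set p : F * F | rot_pair p == p].

Lemma rot_fixedP u v : u \in mu -> u != 1 -> (u, v) \in rot_fixed ->
  [/\ v = u^-1, u^-1 = u ^+ 2 & u ^+ 2 + u + 1 = 0].
Proof.
move=> mu_u u1; rewrite inE xpair_eqE => /andP[/eqP vu /eqP uv].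
have u0 := mu_neq0 mu_u.
have v_sq : v = u ^+ 2 by rewrite -(divfK u0 v) vu expr2.
split; [by [] | by rewrite uv |].
have u3 : u ^+ 3 = 1 by rewrite exprS -v_sq -uv mulfV.
have : (u - 1) * (u ^+ 2 + u + 1) = 0.
  by transitivity (u ^+ 3 - 1); [ring | rewrite u3 subrr].
by move/eqP; rewrite mulf_eq0 subr_eq0 (negbTE u1) => /eqP.
Qed.

Lemma swap_rot_fixed c p : p \in class_pairs c -> p \in rot_fixed -> swap_pair p \in rot_fixed.
Proof.
case: p => u v; rewrite class_pairsP /= => /and5P[mu_u _ u1 _ _].
move=> /(rot_fixedP mu_u u1)[-> inv_u _].
by rewrite inE /rot_pair /swap_pair /= invrK inv_u -expr2 -inv_u.
Qed.

Lemma card_fixed_class_pairs c : (#|class_pairs c :&: rot_fixed| <= 2)%N.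
Proof.
have [->|[p0 p0F]] := set_0Vmem (class_pairs c :&: rot_fixed); first by rewrite cards0.
apply: (@leq_trans #|[set p0; swap_pair p0]|); last by rewrite cards2; case: (_ != _).
apply/subset_leq_card/subsetP => -[u v]; case: p0 p0F => u0 v0.
rewrite !in_setI !class_pairsP /= => /andP[/and5P[mu_u0 _ u01 _ _] F0].
move=> /andP[/and5P[mu_u _ u1 _ _] F1].
have [-> inv_u0 q0] := rot_fixedP mu_u0 u01 F0; have [-> _ q] := rot_fixedP mu_u u1 F1.
have : (u - u0) * (u + u0 + 1) = 0.
  by transitivity ((u ^+ 2 + u + 1) - (u0 ^+ 2 + u0 + 1)); [ring | rewrite q q0 subrr].
rewrite !inE /swap_pair /= !xpair_eqE; move/eqP; rewrite mulf_eq0 subr_eq0.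
case/orP=> [/eqP -> | e]; first by rewrite !eqxx.
have -> : u = u0^-1.
  apply/eqP; rewrite inv_u0 -subr_eq0; apply/eqP.
  transitivity ((u + u0 + 1) - (u0 ^+ 2 + u0 + 1)); first ring.
  by rewrite (eqP e) sub0r; apply/eqP; rewrite oppr_eq0; apply/eqP.
by rewrite invrK !eqxx orbT.
Qed.

Lemma card_class_pairs_mod3 c : (#|class_pairs c| %% 3 != 1)%N.
Proof.
have dvd3 : (3 %| #|class_pairs c :\: rot_fixed|)%N.
  apply: (@dvdn_card_fixfree _ rot_pair) => // p; rewrite in_setD => /andP[not_fixed Cp];
    have Sp := subsetP (class_pairs_sub c) p Cp.
  - rewrite in_setD rot_class_pairs // andbT; apply: contra not_fixed.
    rewrite !inE => /eqP fixed.
    by rewrite -[X in _ == X](rot_pair3 Sp) /= fixed fixed.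
  - exact: rot_pair3.
  - by move: not_fixed; rewrite inE.
have dvd2 : (2 %| #|class_pairs c :&: rot_fixed|)%N.
  apply: (@dvdn_card_fixfree _ swap_pair) => // [p|p _|p].
  - by rewrite !in_setI => /andP[Cp Fp]; rewrite swap_class_pairs // (swap_rot_fixed Cp).
  - exact: swap_pairK.
  - by rewrite in_setI => /andP[/swap_pair_neq].
have := card_fixed_class_pairs c; rewrite -(cardsID rot_fixed (class_pairs c)); lia.
Qed.

Definition inverse_pairs := [set p : F * F | p.2 == p.1^-1].

Lemma inverse_pairsE p : (p \in inverse_pairs) = (p.2 == p.1^-1).
Proof. by rewrite inE. Qed.

Lemma inv_pair_neq p : p \in mu_pairs -> inv_pair p != p.
Proof.
case: p => u v; rewrite inE /inv_pair /= xpair_eqE => /and5P[mu_u mu_v u1 v1 uv].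
have inv_self w : w \in mu -> w != 1 -> w^-1 == w -> w = -1.
  move=> mu_w w1 /eqP ww; have : w ^+ 2 == 1 by rewrite expr2 -{1}ww mulVf ?mu_neq0.
  by rewrite sqrf_eq1 (negbTE w1) => /eqP.
apply: contra uv => /andP[/(inv_self _ mu_u u1) -> /(inv_self _ mu_v v1) ->].
by [].
Qed.

Lemma mu_sqr_neqN1 u : (k %% 4 = 2)%N -> u \in mu -> u ^+ 2 != -1.
Proof.
move=> k4; have [j kj] : exists j, k = (2 * (2 * j + 1))%N by exists (k %/ 4)%N; lia.
rewrite inE kj exprM => /eqP uk; apply: contra_eq_neq uk => ->.
by rewrite -signr_odd oddD oddM /= expr1 eq_sym (oner_neqN1 z_prim n_even).
Qed.

Lemma dvdn4_card_inverse_class_pairs c : (k %% 4 = 2)%N ->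
  (4 %| #|class_pairs c :&: inverse_pairs|)%N.
Proof.
move=> k4; have even_k : ~~ odd k by rewrite -(odd_mod k (erefl : odd 4 = false)) k4.
apply: (@dvdn4_card_klein _ swap_pair opp_pair _ swap_pairK opp_pairK) => // p;
  rewrite !in_setI inverse_pairsE => /andP[Cp /eqP ev].
- by rewrite swap_class_pairs // inverse_pairsE /= ev invrK.
- by rewrite opp_class_pairs // inverse_pairsE /= ev invrN.
rewrite (swap_pair_neq Cp); case: p Cp ev => u v; rewrite class_pairsP /= => /andP[mu_u _] ev.
rewrite /opp_pair /swap_pair /= !xpair_eqE (negbTE (oppf_neq z_prim n_even (mu_neq0 mu_u))) /=.
apply: contra (mu_sqr_neqN1 k4 mu_u) => /andP[/eqP e _].
by rewrite expr2 -{1}e ev mulNr mulVf ?mu_neq0.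
Qed.

Lemma dvdn4_card_noninverse_class_pairs c : (4 %| #|class_pairs c :\: inverse_pairs|)%N.
Proof.
apply: (@dvdn4_card_klein _ swap_pair inv_pair _ swap_pairK inv_pairK) => // p;
  rewrite !in_setD inverse_pairsE => /andP[not_inv Cp].
- rewrite swap_class_pairs // andbT inverse_pairsE; case: p not_inv {Cp} => u v /=.
  by apply: contra => /eqP ->; rewrite invrK.
- rewrite inv_class_pairs // andbT inverse_pairsE; case: p not_inv {Cp} => u v /=.
  by apply: contra; rewrite invrK => /eqP <-; rewrite invrK.
rewrite (swap_pair_neq Cp) (inv_pair_neq (subsetP (class_pairs_sub c) _ Cp)) /=.
case: p not_inv {Cp} => u v /=; rewrite /inv_pair /swap_pair /= xpair_eqE.
by apply: contra => /andP[/eqP <- _]; rewrite invrK.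
Qed.

Lemma dvdn4_card_class_pairs c : (k %% 4 = 2)%N -> (4 %| #|class_pairs c|)%N.
Proof.
move=> k4; rewrite -(cardsID inverse_pairs (class_pairs c)).
by rewrite dvdn_add ?dvdn4_card_inverse_class_pairs ?dvdn4_card_noninverse_class_pairs.
Qed.

End RootsOfUnity.

Theorem theorem3p1 (F : finFieldType) (q k : nat) :
  #|F| = q -> q %% 4 = 1 -> k %| q.-1 -> ~~ odd (q.-1 %/ k) ->
  gives_3design F k ->
  k %% 24 \in [:: 1; 2; 5; 10; 13; 17].
Proof.
move=> <- q4 k_dvd_n e_even design; have [z z_prim] := finField_prim_root F.
have n4 : 4 %| #|F|.-1 by move: q4; clear; lia.
have n_even : ~~ odd #|F|.-1 by move: n4 => /dvdnP[c ->]; rewrite oddM andbF.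
have minus1_square := is_squareN1 z_prim n_even n4.
have k_gt0 := dvdn_gt0 (prim_order_gt0 z_prim) k_dvd_n.
have := design_count_balanced n_even design.
rewrite !(count_in_mu z_prim k_dvd_n n_even e_even) => /eqP.
rewrite eqn_pmul2l // => /eqP balanced.
apply: (@mod24_of_pair_count k #|class_pairs F k true|) => //.
- by rewrite -(card_mu_pairs z_prim k_dvd_n) -card_class_pairs_sum balanced addnn -mul2n.
- exact: dvdn2_card_class_pairs.
- exact: card_class_pairs_mod3 z_prim k_dvd_n n_even e_even minus1_square true.
- exact: dvdn4_card_class_pairs z_prim k_dvd_n n_even e_even minus1_square true.
Qed.
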